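(* Let $A=\mathrm{diag}(G_1,\dots,G_m,[1])\in\mathbb{R}^{n\times n}$, $m\geq1$ (trailing block $[1]$ possibly absent), with $G_j=\begin{bmatrix}c_j&s_j\\-s_j&c_j\end{bmatrix}$, $c_j^2+s_j^2=1$, $s_j\neq 0$, $0<c_1<\cdots<c_m<1$. Let $v_0$ be a unit norm vector with $d(A,v_0)\geq 2$ and $v_0^{(1)}\neq 0$, and let $v_*$ be the limit of the sequence $\{v_k\}$ of the iteration ACI($1$) below. Then $$\min_{\alpha\in\mathbb{R}}\|A-\alpha I\|=\|A-c_1I\|=\|Av_*-c_1v_*\|=(1-c_1^2)^{1/2},$$ i.e. $v_*$ attains the value of the ideal Arnoldi problem $\min_{\alpha\in\mathbb{R}}\|A-\alpha I\|$.
   Context: Block partitioning: $v=[v^{(1)};\dots;v^{(m)};v^{(m+1)}]$ with $v^{(j)}\in\mathbb{R}^2$ for $j\leq m$ (conforming with $G_j$) and $v^{(m+1)}\in\mathbb{R}$ present only if the block $[1]$ is. ACI($1$): for $k=0,1,2,\dots$: $\widetilde w_k=(A-\alpha_kI)v_k$ with $\alpha_k=v_k^TAv_k$; $w_k=\widetilde w_k/\|\widetilde w_k\|$; $\widetilde v_{k+1}=(A^T-\beta_kI)w_k$ with $\beta_k=w_k^TAw_k$; $v_{k+1}=\widetilde v_{k+1}/\|\widetilde v_{k+1}\|$. $d(A,v)$ is the grade of $v$ w.r.t. $A$; $\|\cdot\|$ is the Euclidean vector norm and the induced spectral matrix norm. *)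

From HB Require Import structures.
From mathcomp Require Import all_boot all_order all_algebra.
From mathcomp Require Import all_classical all_reals all_analysis.
Set Implicit Arguments. Unset Strict Implicit. Unset Printing Implicit Defensive.
Import Order.TTheory GRing.Theory Num.Theory numFieldTopology.Exports numFieldNormedType.Exports.
Local Open Scope ring_scope.
Local Open Scope classical_set_scope.

Section Defs.
Variable R : realType.

Definition enorm (n : nat) (x : 'cV[R]_n) : R := Num.sqrt (\sum_i (x i 0) ^+ 2).

Definition opnorm (n : nat) (M : 'M[R]_n) : R :=
  sup [set r | exists x : 'cV[R]_n, enorm x = 1 /\ r = enorm (M *m x)].

Definition polyapp (n : nat) (p : {poly R}) (M : 'M[R]_n) (v : 'cV[R]_n) : 'cV[R]_n :=
  \sum_(i < size p) p`_i *: (M ^+ i *m v).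

(* d is the grade of v w.r.t. M: degree of the minimal monic polynomial p with p(M)v = 0 *)
Definition grade (n : nat) (M : 'M[R]_n) (v : 'cV[R]_n) (d : nat) : Prop :=
  (exists p : {poly R}, p \is monic /\ size p = d.+1 /\ polyapp p M v = 0) /\
  (forall p : {poly R}, p \is monic -> polyapp p M v = 0 -> (d.+1 <= size p)%N).

(* The matrix A = diag(G_1, ..., G_m, [1]) ; the trailing block [1] present iff b.
   Blocks are 0-indexed: G_{j+1} = [[c j, s j], [- s j, c j]]. *)
Definition blockA (m : nat) (b : bool) (c s : nat -> R) : 'M[R]_(2 * m + b) :=
  \matrix_(i, j)
    if ((i < 2 * m) && (j < 2 * m))%N then
      (if (i./2 == j./2)%N then
         (if (i == j :> nat) then c i./2
          else if ~~ odd i then s i./2 else - s i./2)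
       else 0)
    else (if (i == j :> nat) then 1 else 0).

Definition rayleigh (n : nat) (M : 'M[R]_n) (x : 'cV[R]_n) : R := (x^T *m M *m x) 0 0.

Definition normalize (n : nat) (x : 'cV[R]_n) : 'cV[R]_n := (enorm x)^-1 *: x.

Definition aci_step (n : nat) (M : 'M[R]_n) (v : 'cV[R]_n) : 'cV[R]_n :=
  let w := normalize ((M - (rayleigh M v)%:M) *m v) in
  normalize ((M^T - (rayleigh M w)%:M) *m w).

Definition aci_v (n : nat) (M : 'M[R]_n) (v0 : 'cV[R]_n) (k : nat) : 'cV[R]_n :=
  iter k (aci_step M) v0.

End Defs.

From HB Require Import structures.
From mathcomp Require Import all_boot all_order all_algebra.
From mathcomp Require Import all_classical all_reals all_analysis.
From mathcomp Require Import zify ring lra.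
Import Order.TTheory GRing.Theory Num.Theory numFieldTopology.Exports numFieldNormedType.Exports.
Local Open Scope ring_scope.
Local Open Scope classical_set_scope.
Set Implicit Arguments. Unset Strict Implicit. Unset Printing Implicit Defensive.

(* Each 2x2 block G_j of A is a scaled rotation, so for every shift a and every x,
   ||(A - a I) x||^2 = sum_i (1 - 2 a c(i) + a^2) x_i^2, where c(i) is the cosine of
   the block of the index i; the same holds for A^T, and the Rayleigh quotient of a unit
   vector lies in [c_1, 1].  Hence each half step of ACI(1) multiplies the ratio of the
   mass of the iterate outside the first block to its mass on the first block by at most
   theta = 1 - c_1 (c_2 - c_1) < 1, so the limit v_* is a unit vector supported on the
   first block.  For it ||(A - a I) v_*||^2 = 1 - 2 a c_1 + a^2 >= 1 - c_1^2, while
   ||(A - c_1 I) x||^2 <= 1 - c_1^2 for every unit vector x. *)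

(** * Matrices made of rotation blocks *)

(* For an involution [sigma], the direct sum of the blocks [[cc i, ss i], [-ss i, cc i]]
   on the orbits {i < sigma i}; a fixed point of [sigma] must carry [ss i = 0]. *)
Definition rotmx (R : pzRingType) n (sigma : 'I_n -> 'I_n) (cc ss : 'I_n -> R) : 'M[R]_n :=
  \matrix_(i, j) (cc i * (i == j)%:R + ss i * (j == sigma i)%:R).

Definition sqnorm_on (R : pzRingType) n (P : pred 'I_n) (x : 'cV[R]_n) : R :=
  \sum_(i | P i) x i 0 ^+ 2.

Definition tail_ratio (R : fieldType) n (F : pred 'I_n) (x : 'cV[R]_n) : R :=
  sqnorm_on (predC F) x / sqnorm_on F x.

Lemma sum_delta (R : pzSemiRingType) n (f : 'I_n -> R) (k : 'I_n) :
  \sum_j (j == k)%:R * f j = f k.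
Proof.
rewrite (bigD1 k) //= eqxx mul1r big1 ?addr0 // => j /negbTE ->.
by rewrite mul0r.
Qed.

Lemma sum_odd_involution (R : numFieldType) n (sigma : 'I_n -> 'I_n) (P : pred 'I_n)
    (f : 'I_n -> R) :
  involutive sigma -> (forall i, P (sigma i) = P i) ->
  (forall i, f (sigma i) = - f i) -> \sum_(i | P i) f i = 0.
Proof.
move=> sigmaK P_sigma f_odd; apply/eqP; rewrite -[_ == 0](mulrn_eq0 _ 2) mulr2n.
rewrite {1}(reindex_inj (inv_inj sigmaK)) /=.
under eq_bigl do rewrite P_sigma.
by rewrite -big_split big1 // => i _; rewrite f_odd; apply: addNr.
Qed.

Lemma sqnorm_on_split (R : pzRingType) n (F : pred 'I_n) (x : 'cV[R]_n) :
  sqnorm_on predT x = sqnorm_on F x + sqnorm_on (predC F) x.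
Proof. exact: bigID. Qed.

Lemma sqnorm_on_ge0 (R : realDomainType) n (P : pred 'I_n) (x : 'cV[R]_n) :
  0 <= sqnorm_on P x.
Proof. by apply: sumr_ge0 => i _; apply: sqr_ge0. Qed.

Lemma sqnorm_on_gt0 (R : realDomainType) n (P : pred 'I_n) (x : 'cV[R]_n) i :
  P i -> x i 0 != 0 -> 0 < sqnorm_on P x.
Proof.
move=> Pi xi_neq0; rewrite /sqnorm_on (bigD1 i) //=.
apply: ltr_wpDr; first by apply: sumr_ge0 => j _; apply: sqr_ge0.
by rewrite lt_def sqrf_eq0 xi_neq0 sqr_ge0.
Qed.

Section RotationMatrix.
Variables (R : realFieldType) (n : nat) (sigma : 'I_n -> 'I_n) (cc ss : 'I_n -> R).
Hypothesis sigmaK : involutive sigma.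
Hypothesis cc_sigma : forall i, cc (sigma i) = cc i.
Hypothesis ss_sigma : forall i, ss (sigma i) = - ss i.
Hypothesis cc_ss : forall i, cc i ^+ 2 + ss i ^+ 2 = 1.

Lemma rotmx_mul (x : 'cV[R]_n) i :
  (rotmx sigma cc ss *m x) i 0 = cc i * x i 0 + ss i * x (sigma i) 0.
Proof.
rewrite mxE -(sum_delta (fun j => cc i * x j 0)) -(sum_delta (fun j => ss i * x j 0)).
rewrite -big_split /=; apply: eq_bigr => j _; rewrite mxE [i == j]eq_sym; ring.
Qed.

Lemma trmx_rotmx : (rotmx sigma cc ss)^T = rotmx sigma cc (fun i => - ss i).
Proof.
apply/matrixP => i j; rewrite !mxE [i == sigma j]eq_sym (canF_eq sigmaK).
have [->|ji] := eqVneq j (sigma i).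
  by rewrite cc_sigma ss_sigma [sigma i == i]eq_sym.
by have [->|] := eqVneq i j; rewrite !mulr0.
Qed.

Lemma rotmx_shift_mul (a : R) (x : 'cV[R]_n) i :
  ((rotmx sigma cc ss - a%:M) *m x) i 0 = (cc i - a) * x i 0 + ss i * x (sigma i) 0.
Proof. by rewrite mulmxBl mul_scalar_mx mxE rotmx_mul mxE mxE; ring. Qed.

Lemma sqnorm_on_rotmx_shift (P : pred 'I_n) (a : R) (x : 'cV[R]_n) :
  (forall i, P (sigma i) = P i) ->
  sqnorm_on P ((rotmx sigma cc ss - a%:M) *m x) =
  \sum_(i | P i) (1 - 2 * a * cc i + a ^+ 2) * x i 0 ^+ 2.
Proof.
move=> P_sigma; rewrite /sqnorm_on.
have expand i : ((cc i - a) * x i 0 + ss i * x (sigma i) 0) ^+ 2 =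
    (cc i - a) ^+ 2 * x i 0 ^+ 2 + ss i ^+ 2 * x (sigma i) 0 ^+ 2 +
    2 * ((cc i - a) * ss i * x i 0 * x (sigma i) 0) by ring.
under eq_bigr do rewrite rotmx_shift_mul expand.
rewrite big_split /= -mulr_sumr (@sum_odd_involution _ _ sigma _
    (fun i => (cc i - a) * ss i * x i 0 * x (sigma i) 0)) //; last first.
  by move=> i; rewrite cc_sigma ss_sigma sigmaK; ring.
have swap : \sum_(i | P i) ss i ^+ 2 * x (sigma i) 0 ^+ 2 =
    \sum_(i | P i) ss i ^+ 2 * x i 0 ^+ 2.
  rewrite (reindex_inj (inv_inj sigmaK)) /=.
  by apply: eq_big => [i|i _]; rewrite ?P_sigma // sigmaK ss_sigma sqrrN.
have weight i : (1 - 2 * a * cc i + a ^+ 2) * x i 0 ^+ 2 =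
    (cc i - a) ^+ 2 * x i 0 ^+ 2 + ss i ^+ 2 * x i 0 ^+ 2.
  by rewrite -mulrDl; congr (_ * _); have := cc_ss i; nra.
by rewrite mulr0 addr0 big_split /= swap (eq_bigr _ (fun i _ => weight i)) big_split.
Qed.

Lemma norm_cc_le1 i : `|cc i| <= 1.
Proof.
rewrite -(ler_pXn2r (n := 2)) ?nnegrE // expr1n real_normK ?num_real //.
by rewrite -(cc_ss i) lerDl sqr_ge0.
Qed.

End RotationMatrix.

Section EuclideanNorm.
Variables (R : realType) (n : nat).
Implicit Types (x y : 'cV[R]_n) (M : 'M[R]_n).

Lemma enormE x : enorm x = Num.sqrt (sqnorm_on predT x).
Proof. by []. Qed.

Lemma enorm_sqr x : enorm x ^+ 2 = sqnorm_on predT x.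
Proof. by rewrite enormE sqr_sqrtr ?sqnorm_on_ge0. Qed.

Lemma sqnorm_unit x : enorm x = 1 -> sqnorm_on predT x = 1.
Proof. by move=> x1; rewrite -enorm_sqr x1 expr1n. Qed.

Lemma sqnorm_on_normalize (P : pred 'I_n) x :
  sqnorm_on P (normalize x) = sqnorm_on P x / sqnorm_on predT x.
Proof.
rewrite /sqnorm_on mulr_suml; apply: eq_bigr => i _.
by rewrite /normalize mxE exprMn exprVn enorm_sqr mulrC.
Qed.

Lemma opnorm_ge M (B : R) x :
  (forall y, enorm y = 1 -> enorm (M *m y) <= B) ->
  enorm x = 1 -> enorm (M *m x) <= opnorm M.
Proof.
move=> MB x1; apply: ub_le_sup; last by exists x.
by exists B => _ [y [y1 ->]]; apply: MB.
Qed.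

Lemma opnorm_attained M x :
  enorm x = 1 -> (forall y, enorm y = 1 -> enorm (M *m y) <= enorm (M *m x)) ->
  opnorm M = enorm (M *m x).
Proof.
move=> x1 Mx_max; apply/le_anti; rewrite (opnorm_ge Mx_max) // andbT.
by apply: ge_sup; [exists (enorm (M *m x)), x | move=> _ [y [y1 ->]]; apply: Mx_max].
Qed.

End EuclideanNorm.

Lemma rayleigh_rotmx (R : realType) n (sigma : 'I_n -> 'I_n) (cc ss : 'I_n -> R)
    (x : 'cV[R]_n) :
  involutive sigma -> (forall i, ss (sigma i) = - ss i) ->
  rayleigh (rotmx sigma cc ss) x = \sum_i cc i * x i 0 ^+ 2.
Proof.
move=> sigmaK ss_sigma; rewrite /rayleigh -mulmxA mxE.
under eq_bigr do rewrite mxE rotmx_mul mulrDr.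
rewrite big_split /= (@sum_odd_involution _ _ sigma _
  (fun i => x i 0 * (ss i * x (sigma i) 0))) // ?addr0; last first.
  by move=> i; rewrite ss_sigma sigmaK; ring.
by apply: eq_bigr => i _; ring.
Qed.

Lemma cvg_sqnorm_on (R : realType) n (P : pred 'I_n) (u : nat -> 'cV[R]_n) (l : 'cV[R]_n) :
  (forall i, u k i 0 @[k --> \oo] --> l i 0) ->
  sqnorm_on P (u k) @[k --> \oo] --> sqnorm_on P l.
Proof.
move=> u_cvg; apply: cvg_big => [|i _]; first exact: add_continuous.
by under eq_cvg do rewrite expr2; rewrite expr2; apply: cvgM.
Qed.

(* The difference of the two sides is (c1 - c0) (2 a - c0 D) with
   D = 1 - 2 a c0 + a^2 <= 2. *)
Lemma shift_factor_le (R : realFieldType) (c0 c1 a : R) :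
  0 <= c0 -> c0 <= c1 -> c0 <= a -> a <= 1 ->
  1 - 2 * a * c1 + a ^+ 2 <= (1 - c0 * (c1 - c0)) * (1 - 2 * a * c0 + a ^+ 2).
Proof.
move=> c0_ge0 c01 c0a a1.
have D_le2 : 1 - 2 * a * c0 + a ^+ 2 <= 2 by nra.
have : c0 * (1 - 2 * a * c0 + a ^+ 2) <= 2 * a by nra.
nra.
Qed.

(** * Contraction of ACI(1) towards the first block *)

Section Contraction.
Variables (R : realType) (n : nat) (sigma : 'I_n -> 'I_n) (cc ss : 'I_n -> R).
Variables (F : pred 'I_n) (c0 c1 : R).
Hypothesis sigmaK : involutive sigma.
Hypothesis cc_sigma : forall i, cc (sigma i) = cc i.
Hypothesis ss_sigma : forall i, ss (sigma i) = - ss i.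
Hypothesis cc_ss : forall i, cc i ^+ 2 + ss i ^+ 2 = 1.
Hypothesis F_sigma : forall i, F (sigma i) = F i.
Hypothesis cc_F : forall i, F i -> cc i = c0.
Hypothesis cc_notF : forall i, ~~ F i -> c1 <= cc i.
Hypotheses (c0_gt0 : 0 < c0) (c0_lt_c1 : c0 < c1) (c1_le1 : c1 <= 1).

Let theta := 1 - c0 * (c1 - c0).

Let theta_ge0 : 0 <= theta.
Proof. by rewrite subr_ge0; have := c0_gt0; have := c0_lt_c1; have := c1_le1; nra. Qed.

Let c0_lt1 : c0 < 1.
Proof. exact: lt_le_trans c0_lt_c1 c1_le1. Qed.

Let notF_sigma i : (predC F) (sigma i) = (predC F) i.
Proof. by rewrite /= F_sigma. Qed.

Lemma c0_le_cc i : c0 <= cc i.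
Proof. by case: (boolP (F i)) => [/cc_F -> | /cc_notF]; last exact/le_trans/ltW. Qed.

Lemma rayleigh_rotmx_bounds x :
  sqnorm_on predT x = 1 -> c0 <= rayleigh (rotmx sigma cc ss) x <= 1.
Proof.
move=> x1; rewrite rayleigh_rotmx //.
have sumx : \sum_i x i 0 ^+ 2 = 1 := x1.
apply/andP; split.
  rewrite -[c0]mulr1 -sumx mulr_sumr; apply: ler_sum => i _.
  by apply: ler_wpM2r; [apply: sqr_ge0 | apply: c0_le_cc].
rewrite -sumx; apply: ler_sum => i _.
by rewrite ler_piMl ?sqr_ge0 // (le_trans (ler_norm _)) // (norm_cc_le1 cc_ss).
Qed.

Lemma shift_normalize_contract (e : 'I_n -> R) (a : R) (x : 'cV[R]_n) :
  (forall i, e (sigma i) = - e i) -> (forall i, cc i ^+ 2 + e i ^+ 2 = 1) ->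
  c0 <= a <= 1 -> sqnorm_on predT x = 1 -> 0 < sqnorm_on F x ->
  let y := normalize ((rotmx sigma cc e - a%:M) *m x) in
  [/\ sqnorm_on predT y = 1, 0 < sqnorm_on F y & tail_ratio F y <= theta * tail_ratio F x].
Proof.
move=> e_sigma cc_e /andP[c0a a1] x1 xF_gt0 y.
set z := (rotmx sigma cc e - a%:M) *m x.
set D := 1 - 2 * a * c0 + a ^+ 2.
have a_ge0 : 0 <= a by apply: le_trans c0a; apply: ltW.
have D_gt0 : 0 < D.
  by rewrite /D; have := c0_gt0; have := c0_lt1; have := sqr_ge0 (a - c0); nra.
have zF : sqnorm_on F z = D * sqnorm_on F x.
  rewrite sqnorm_on_rotmx_shift // mulr_sumr.
  by apply: eq_bigr => i Fi; rewrite cc_F.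
have znotF : sqnorm_on (predC F) z <= (1 - 2 * a * c1 + a ^+ 2) * sqnorm_on (predC F) x.
  rewrite sqnorm_on_rotmx_shift // mulr_sumr; apply: ler_sum => i notFi.
  apply: ler_wpM2r; first exact: sqr_ge0.
  by have := cc_notF notFi; nra.
have zF_gt0 : 0 < sqnorm_on F z by rewrite zF mulr_gt0.
have z_gt0 : 0 < sqnorm_on predT z.
  by rewrite (sqnorm_on_split F); apply: ltr_wpDr => //; apply: sqnorm_on_ge0.
rewrite /y /tail_ratio !sqnorm_on_normalize divff ?gt_eqF //; split => //.
  exact: divr_gt0.
rewrite -/z invf_div mulrA divfK ?gt_eqF // ler_pdivrMr // zF.
have -> : theta * (sqnorm_on (predC F) x / sqnorm_on F x) * (D * sqnorm_on F x) =
    theta * D * sqnorm_on (predC F) x by field; rewrite gt_eqF.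
apply: le_trans znotF _.
apply: ler_wpM2r; first exact: sqnorm_on_ge0.
exact: shift_factor_le (ltW c0_gt0) (ltW c0_lt_c1) c0a a1.
Qed.

Lemma aci_step_contract x :
  sqnorm_on predT x = 1 -> 0 < sqnorm_on F x ->
  let y := aci_step (rotmx sigma cc ss) x in
  [/\ sqnorm_on predT y = 1, 0 < sqnorm_on F y &
      tail_ratio F y <= theta ^+ 2 * tail_ratio F x].
Proof.
move=> x1 xF_gt0; rewrite /aci_step trmx_rotmx //.
have [w1 wF_gt0 w_ratio] :=
  shift_normalize_contract ss_sigma cc_ss (rayleigh_rotmx_bounds x1) x1 xF_gt0.
have ss_opp_sigma i : - ss (sigma i) = - - ss i by rewrite ss_sigma.
have cc_ss_opp i : cc i ^+ 2 + (- ss i) ^+ 2 = 1 by rewrite sqrrN.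
have [y1 yF_gt0 y_ratio] :=
  shift_normalize_contract ss_opp_sigma cc_ss_opp (rayleigh_rotmx_bounds w1) w1 wF_gt0.
split => //; apply: le_trans y_ratio _; rewrite expr2 -mulrA.
by move: (ler_wpM2l theta_ge0 w_ratio).
Qed.

Lemma aci_v_contract v0 k :
  sqnorm_on predT v0 = 1 -> 0 < sqnorm_on F v0 ->
  let v := aci_v (rotmx sigma cc ss) v0 k in
  [/\ sqnorm_on predT v = 1, 0 < sqnorm_on F v &
      tail_ratio F v <= (theta ^+ 2) ^+ k * tail_ratio F v0].
Proof.
move=> v01 v0F_gt0; elim: k => [|k [vk1 vkF_gt0 vk_ratio]]; first by rewrite expr0 mul1r.
have [v1 vF_gt0 v_ratio] := aci_step_contract vk1 vkF_gt0.
rewrite /aci_v iterS; split => //; apply: le_trans v_ratio _.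
by rewrite [_ ^+ k.+1]exprS -mulrA; move: (ler_wpM2l (sqr_ge0 theta) vk_ratio).
Qed.

Lemma aci_v_limit_concentrated (v0 vstar : 'cV[R]_n) :
  sqnorm_on predT v0 = 1 -> 0 < sqnorm_on F v0 ->
  (forall i, aci_v (rotmx sigma cc ss) v0 k i 0 @[k --> \oo] --> vstar i 0) ->
  sqnorm_on predT vstar = 1 /\ sqnorm_on (predC F) vstar = 0.
Proof.
move=> v01 v0F_gt0 v_cvg.
have theta2_lt1 : `|theta ^+ 2| < 1.
  have theta_lt1 : theta < 1 by rewrite /theta gtrBl mulr_gt0 // subr_gt0.
  by rewrite ger0_norm ?sqr_ge0 //; have := theta_ge0; nra.
split.
  have v1 k : sqnorm_on predT (aci_v (rotmx sigma cc ss) v0 k) = 1.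
    by have [] := aci_v_contract k v01 v0F_gt0.
  have := cvg_sqnorm_on (P := predT) v_cvg; under eq_cvg do rewrite v1.
  by move/(cvg_lim (@Rhausdorff R)); rewrite lim_cst.
apply/le_anti; rewrite sqnorm_on_ge0 andbT.
have bound_cvg0 : (theta ^+ 2) ^+ k * tail_ratio F v0 @[k --> \oo] --> 0.
  by rewrite -(mul0r (tail_ratio F v0)); apply: cvgM (cvg_expr _) (cvg_cst _).
apply: ler_cvg_to (cvg_sqnorm_on (P := predC F) v_cvg) bound_cvg0 _.
apply: nearW => k; have [vk1 vkF_gt0 vk_ratio] := aci_v_contract k v01 v0F_gt0.
apply: le_trans vk_ratio; rewrite /tail_ratio ler_pdivlMr // ler_piMr ?sqnorm_on_ge0 //.
by rewrite -vk1 (sqnorm_on_split F) lerDl sqnorm_on_ge0.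
Qed.

Lemma enorm_rotmx_shift_le (a : R) (y : 'cV[R]_n) :
  enorm y = 1 -> enorm ((rotmx sigma cc ss - a%:M) *m y) <= 1 + `|a|.
Proof.
move=> y1; rewrite enormE -[X in _ <= X]ger0_norm ?addr_ge0 // -sqrtr_sqr.
rewrite ler_sqrt ?sqr_ge0 // sqnorm_on_rotmx_shift //.
have -> : (1 + `|a|) ^+ 2 = (1 + `|a|) ^+ 2 * sqnorm_on predT y by rewrite sqnorm_unit ?mulr1.
rewrite mulr_sumr; apply: ler_sum => i _.
apply: ler_wpM2r; first exact: sqr_ge0.
have acc : - (a * cc i) <= `|a|.
  by rewrite (le_trans (ler_norm _)) // normrN normrM ler_piMr // (norm_cc_le1 cc_ss).
by have := real_normK (num_real a); nra.
Qed.

Lemma enorm_rotmx_shift_c0_le (y : 'cV[R]_n) :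
  enorm y = 1 -> enorm ((rotmx sigma cc ss - c0%:M) *m y) <= Num.sqrt (1 - c0 ^+ 2).
Proof.
move=> y1; rewrite enormE ler_sqrt; last first.
  by have := c0_gt0; have := c0_lt1; nra.
have -> : 1 - c0 ^+ 2 = (1 - c0 ^+ 2) * sqnorm_on predT y by rewrite sqnorm_unit ?mulr1.
rewrite sqnorm_on_rotmx_shift // mulr_sumr; apply: ler_sum => i _.
apply: ler_wpM2r; first exact: sqr_ge0.
by have := c0_le_cc i; have := c0_gt0; nra.
Qed.

Lemma enorm_rotmx_shift_concentrated (a : R) (x : 'cV[R]_n) :
  enorm x = 1 -> sqnorm_on (predC F) x = 0 ->
  enorm ((rotmx sigma cc ss - a%:M) *m x) = Num.sqrt (1 - 2 * a * c0 + a ^+ 2).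
Proof.
move=> x1 x_notF0; rewrite enormE sqnorm_on_rotmx_shift //; congr Num.sqrt.
have xF1 : sqnorm_on F x = 1.
  by rewrite -(sqnorm_unit x1) (sqnorm_on_split F) x_notF0 addr0.
rewrite (bigID F) /= [X in _ + X]big1 => [|i notFi]; last first.
  by rewrite (psumr_eq0P _ x_notF0) ?mulr0 // => j _; apply: sqr_ge0.
under eq_bigr => i Fi do rewrite cc_F //.
by rewrite addr0 -mulr_sumr -/(sqnorm_on F x) xF1 mulr1.
Qed.

Lemma rotmx_ideal_arnoldi (v0 vstar : 'cV[R]_n) :
  enorm v0 = 1 -> 0 < sqnorm_on F v0 ->
  (forall i j, aci_v (rotmx sigma cc ss) v0 k i j @[k --> \oo] --> vstar i j) ->
  let A := rotmx sigma cc ss in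
  (forall alpha : R, opnorm (A - c0%:M) <= opnorm (A - alpha%:M)) /\
  opnorm (A - c0%:M) = enorm (A *m vstar - c0 *: vstar) /\
  enorm (A *m vstar - c0 *: vstar) = Num.sqrt (1 - c0 ^+ 2).
Proof.
move=> v01 v0F_gt0 v_cvg A.
have [vstar1 vstar_notF0] :=
  aci_v_limit_concentrated (sqnorm_unit v01) v0F_gt0 (fun i => v_cvg i 0).
have vstar_unit : enorm vstar = 1 by rewrite enormE vstar1 sqrtr1.
have e_c0 : enorm ((A - c0%:M) *m vstar) = Num.sqrt (1 - c0 ^+ 2).
  by rewrite enorm_rotmx_shift_concentrated //; congr Num.sqrt; ring.
have op_c0 : opnorm (A - c0%:M) = Num.sqrt (1 - c0 ^+ 2).
  rewrite -e_c0; apply: opnorm_attained => // y y1.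
  by rewrite e_c0; apply: enorm_rotmx_shift_c0_le.
rewrite -mul_scalar_mx -mulmxBl e_c0 op_c0; split => // a.
apply: le_trans (opnorm_ge (enorm_rotmx_shift_le a) vstar_unit).
rewrite enorm_rotmx_shift_concentrated // ler_sqrt;
  by have := sqr_ge0 (a - c0); have := c0_gt0; have := c0_lt1; nra.
Qed.

End Contraction.

(** * The matrix [blockA] *)

(* The other index of the 2x2 block of [i < 2 m]; the index of the trailing block is fixed. *)
Definition block_partner (m i : nat) : nat :=
  if (i < 2 * m)%N then (~~ odd i + (i./2).*2)%N else i.

Lemma block_partner_half m i : (block_partner m i)./2 = i./2.
Proof. by rewrite /block_partner; case: ifP => // _; rewrite half_bit_double. Qed.

Lemma block_partner_odd m i : (i < 2 * m)%N -> odd (block_partner m i) = ~~ odd i.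
Proof. by rewrite /block_partner => ->; rewrite oddD odd_double addbF oddb. Qed.

Lemma block_partner_ltn m i : (block_partner m i < 2 * m)%N = (i < 2 * m)%N.
Proof.
rewrite /block_partner; case: ifP => // hi.
by rewrite mul2n -ltn_half_double half_bit_double ltn_half_double -mul2n.
Qed.

Lemma block_partnerK m : involutive (block_partner m).
Proof.
move=> i; case: (ltnP i (2 * m)) => hi; last by rewrite /block_partner !ifN // -?leqNgt.
rewrite {1}/block_partner block_partner_ltn hi block_partner_odd // negbK block_partner_half.
exact: odd_double_half.
Qed.

Lemma block_partner_lt m b (i : 'I_(2 * m + b)) : (block_partner m i < 2 * m + b)%N.
Proof.
case: (ltnP i (2 * m)) => hi; last by rewrite /block_partner ifN -?leqNgt.
by rewrite (leq_trans _ (leq_addr b _)) // block_partner_ltn.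
Qed.

Definition block_partner_ord m b (i : 'I_(2 * m + b)) : 'I_(2 * m + b) :=
  Ordinal (block_partner_lt i).

Lemma block_partner_ordK m b : involutive (@block_partner_ord m b).
Proof. by move=> i; apply: val_inj; rewrite /= block_partnerK. Qed.

Lemma block_partner_lt2 m i : (block_partner m i < 2)%N = (i < 2)%N.
Proof. by rewrite -[2%N]/(1.*2) -!ltn_half_double block_partner_half. Qed.

Section BlockA.
Variables (R : realType) (m : nat) (b : bool) (c s : nat -> R).

Definition block_cos (i : nat) : R := if (i < 2 * m)%N then c i./2 else 1.
Definition block_sin (i : nat) : R :=
  if (i < 2 * m)%N then (if odd i then - s i./2 else s i./2) else 0.

Lemma block_cos_partner i : block_cos (block_partner m i) = block_cos i.
Proof. by rewrite /block_cos block_partner_ltn block_partner_half. Qed.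

Lemma block_sin_partner i : block_sin (block_partner m i) = - block_sin i.
Proof.
rewrite /block_sin block_partner_ltn; case: ifP => hi; last by rewrite oppr0.
by rewrite block_partner_odd // block_partner_half; case: (odd i); rewrite ?opprK.
Qed.

Lemma blockA_rotmx :
  blockA m b c s = rotmx (@block_partner_ord m b) (fun i => block_cos i) (fun i => block_sin i).
Proof.
apply/matrixP => i j; rewrite !mxE /block_cos /block_sin.
have -> : (j == block_partner_ord i) = (j == block_partner m i :> nat) by [].
have -> : (i == j) = (i == j :> nat) by [].
case: (ltnP i (2 * m)) => hi /=; last first.
  by rewrite mul0r addr0 mul1r; case: eqP.
case: (ltnP j (2 * m)) => hj /=; last first.
  have -> : (i == j :> nat) = false by apply/eqP; lia.
  have -> : (j == block_partner m i :> nat) = false.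
    by apply/eqP => ji; move: hj; rewrite ji leqNgt block_partner_ltn hi.
  by rewrite !mulr0 addr0.
have [<-|ij] := eqVneq (i : nat) j.
  have -> : (i == block_partner m i :> nat) = false.
    by apply/eqP => ip; move: (block_partner_odd hi); rewrite -ip; case: (odd i).
  by rewrite eqxx mulr1 mulr0 addr0.
have [jp|jp] := eqVneq (j : nat) (block_partner m i).
  by rewrite jp block_partner_half eqxx mulr0 mulr1 add0r; case: (odd i).
have -> : (i./2 == j./2) = false.
  apply/eqP => hd; move/eqP: jp; apply.
  move: ij; rewrite /block_partner hi -(odd_double_half j) -{1}(odd_double_half i) hd.
  by case: (odd i); case: (odd j); rewrite ?eqxx.
by rewrite !mulr0 addr0.
Qed.

Hypothesis c_s : forall j, (j < m)%N -> c j ^+ 2 + s j ^+ 2 = 1.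
Hypothesis c_incr : forall j, (j.+1 < m)%N -> c j < c j.+1.
Hypothesis c_lt1 : c m.-1 < 1.

Lemma block_cos_sin i : block_cos i ^+ 2 + block_sin i ^+ 2 = 1.
Proof.
rewrite /block_cos /block_sin; case: ifP => hi; last by rewrite expr1n expr0n addr0.
by case: (odd i); rewrite ?sqrrN c_s // ltn_half_double -mul2n.
Qed.

Lemma c_le_mono j k : (j <= k)%N -> (k < m)%N -> c j <= c k.
Proof.
elim: k => [|k IHk]; first by rewrite leqn0 => /eqP->.
rewrite leq_eqVlt => /orP[/eqP-> // | jk] km.
exact: le_trans (IHk jk (ltnW km)) (ltW (c_incr km)).
Qed.

Lemma c_lt1_in j : (j < m)%N -> c j < 1.
Proof. by move=> jm; apply/(le_lt_trans _ c_lt1)/c_le_mono; lia. Qed.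

Lemma block_cos_first i : (0 < m)%N -> (i < 2)%N -> block_cos i = c 0.
Proof.
move=> m_gt0 i_lt2; rewrite /block_cos (leq_trans i_lt2) ?leq_pmulr //.
by case: i i_lt2 => [|[]].
Qed.

(* [c_2] of the paper, or 1 when [m = 1]: it bounds the diagonal of [blockA] from below
   outside the first block. *)
Definition next_cos : R := if (1 < m)%N then c 1%N else 1.

Lemma block_cos_ge i : ~~ (i < 2)%N -> next_cos <= block_cos i.
Proof.
rewrite -leqNgt /next_cos /block_cos => i_ge2.
case: ifP => m_gt1; case: ifP => hi //; first by apply: c_le_mono; lia.
- by apply/ltW/c_lt1_in.
- by lia.
Qed.

Lemma c0_lt_next_cos : (0 < m)%N -> c 0%N < next_cos.
Proof. by move=> m_gt0; rewrite /next_cos; case: ifP => [/c_incr | _]; last exact: c_lt1_in. Qed.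

Lemma next_cos_le1 : next_cos <= 1.
Proof. by rewrite /next_cos; case: ifP => // m_gt1; apply/ltW/c_lt1_in. Qed.

End BlockA.

Theorem mainTheorem14 (R : realType) (m : nat) (b : bool) (c s : nat -> R)
    (v0 vstar : 'cV[R]_(2 * m + b)) :
  (1 <= m)%N ->
  (forall j, (j < m)%N -> c j ^+ 2 + s j ^+ 2 = 1) ->
  (forall j, (j < m)%N -> s j != 0) ->
  0 < c 0%N ->
  (forall j, (j.+1 < m)%N -> c j < c j.+1) ->
  c m.-1 < 1 ->
  enorm v0 = 1 ->
  (exists d, grade (blockA m b c s) v0 d /\ (2 <= d)%N) ->
  (exists i : 'I_(2 * m + b), (i < 2)%N /\ v0 i 0 != 0) ->
  (forall i j, (fun k => aci_v (blockA m b c s) v0 k i j) @ \oo --> vstar i j) ->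
  let A := blockA m b c s in
  (forall alpha : R, opnorm (A - (c 0%N)%:M) <= opnorm (A - alpha%:M)) /\
  opnorm (A - (c 0%N)%:M) = enorm (A *m vstar - c 0%N *: vstar) /\
  enorm (A *m vstar - c 0%N *: vstar) = Num.sqrt (1 - c 0%N ^+ 2).
Proof.
move=> m_gt0 c_s _ c0_gt0 c_incr c_lt1 v0_unit _ [i0 [i0_lt2 v0i0_neq0]] v_cvg.
rewrite blockA_rotmx in v_cvg *.
apply: (rotmx_ideal_arnoldi (F := fun i : 'I_(2 * m + b) => (i < 2)%N)
          (c1 := next_cos m c)) => //.
- exact: block_partner_ordK.
- by move=> i; apply: block_cos_partner.
- by move=> i; apply: block_sin_partner.
- by move=> i; apply: block_cos_sin.
- by move=> i; apply: block_partner_lt2.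
- by move=> i; apply: block_cos_first.
- by move=> i; apply: block_cos_ge.
- exact: c0_lt_next_cos.
- exact: next_cos_le1.
- exact: v0_unit.
- exact: sqnorm_on_gt0 i0_lt2 v0i0_neq0.
Qed.
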